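(* Let $k=3$, $t\ge 2$, $d=2^t-1$, $n\ge d$ and $j=n-d$. Then in $\mathbb{F}_2[w_2,w_3]$, \[ r_{j-1}q_n+w_3r_{j-2}q_{n-1}+r_jq_{n-2}=0, \] a homogeneous relation of degree $(d-2)+3j$.
   Context: In $\mathbb{F}_2[w_2,w_3]$ ($\deg w_2=2,\deg w_3=3$): $q_0=1$, $q_m=0$ for $m<0$, $q_m=w_2q_{m-2}+w_3q_{m-3}$ for $m\ge1$; and $r_0=1$, $r_m=0$ for $m<0$, $r_{m+1}=w_2r_m+w_3^2r_{m-2}$ for $m\ge 0$ (so $\deg r_m=2m$). *)

From HB Require Import structures.
From mathcomp Require Import all_boot all_algebra.
From mathcomp Require Export all_boot all_algebra.
From mathcomp Require Export mpoly.
Set Implicit Arguments. Unset Strict Implicit. Unset Printing Implicit Defensive.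
Import GRing.Theory.
Local Open Scope ring_scope.

Notation P := {mpoly 'F_2[2]}.

(* the generators w2 (degree 2) and w3 (degree 3) *)
Definition w2 : P := 'X_0.
Definition w3 : P := 'X_1.

(* q3 m = (q_m, q_{m-1}, q_{m-2}), with q_0 = 1, q_m = 0 for m < 0,
   q_m = w2 q_{m-2} + w3 q_{m-3} for m >= 1 *)
Fixpoint q3 (m : nat) : P * P * P :=
  match m with
  | 0 => (1, 0, 0)
  | m'.+1 => let: (a, b, c) := q3 m' in (w2 * b + w3 * c, a, b)
  end.

(* r3 m = (r_m, r_{m-1}, r_{m-2}), with r_0 = 1, r_m = 0 for m < 0,
   r_{m+1} = w2 r_m + w3^2 r_{m-2} for m >= 0 *)
Fixpoint r3 (m : nat) : P * P * P :=
  match m with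
  | 0 => (1, 0, 0)
  | m'.+1 => let: (a, b, c) := r3 m' in (w2 * a + w3 ^+ 2 * c, a, b)
  end.

Definition q (m : int) : P :=
  match m with Posz k => (q3 k).1.1 | Negz _ => 0 end.
Definition r (m : int) : P :=
  match m with Posz k => (r3 k).1.1 | Negz _ => 0 end.

(* Put R_j(n) := r_(j-1) q_n + w3 r_(j-2) q_(n-1) + r_j q_(n-2).  Expanding
   r_(j+1) and q_(n+1) by their recurrences, the two terms w2 r_j q_(n-1) cancel
   in characteristic 2 and R_(j+1)(n+1) = w3 R_j(n); as R_0(n) = q_(n-2), this
   gives R_j(d+j) = w3^j q_(d-2).  The addition formula
   q_(n+k) = q_n q_k + q_(n+1) q_(k-1) + w3 q_(n-1) q_(k-2) yields, again in
   characteristic 2, q_(2k+1) = w3 q_(k-1)^2, whence q_(2^t-3) = 0 for t >= 1. *)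

From mathcomp Require Import all_boot all_algebra mpoly.
From mathcomp Require Import ring zify.
From Stdlib Require Import Lia.
Import GRing.Theory.
Local Open Scope ring_scope.

Lemma natr2_eq0 : 2%:R = 0 :> P.
Proof.
have -> : (2%:R : P) = (2%:R : 'F_2)%:MP by rewrite rmorph_nat.
by rewrite (_ : 2%:R = 0 :> 'F_2) ?mpolyC0 //; apply/eqP.
Qed.

Lemma subr_char2 (x y z : P) : x - y = z *+ 2 -> x = y.
Proof. by move/eqP; rewrite -mulr_natr natr2_eq0 mulr0 subr_eq0 => /eqP. Qed.

Lemma q_neg (m : int) : m < 0 -> q m = 0.
Proof. by case: m. Qed.

Lemma r_neg (m : int) : m < 0 -> r m = 0.
Proof. by case: m. Qed.

Lemma q3E (k : nat) : q3 k = (q k, q (k%:Z - 1), q (k%:Z - 2)).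
Proof.
elim: k => [|k IH] //.
have -> : q k.+1 = w2 * q (k%:Z - 1) + w3 * q (k%:Z - 2) by rewrite /q /= IH.
by rewrite [q3 _]/= IH; congr (_, q _, q _); lia.
Qed.

Lemma r3E (k : nat) : r3 k = (r k, r (k%:Z - 1), r (k%:Z - 2)).
Proof.
elim: k => [|k IH] //.
have -> : r k.+1 = w2 * r k + w3 ^+ 2 * r (k%:Z - 2) by rewrite /r /= IH.
by rewrite [r3 _]/= IH; congr (_, r _, r _); lia.
Qed.

Lemma qS (m : int) : 0 <= m -> q (m + 1) = w2 * q (m - 1) + w3 * q (m - 2).
Proof.
case: m => // k _; have -> : k%:Z + 1 = k.+1 by lia.
by rewrite [q k.+1]/q /= q3E.
Qed.

Lemma rS (m : int) : 0 <= m -> r (m + 1) = w2 * r m + w3 ^+ 2 * r (m - 2).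
Proof.
case: m => // k _; have -> : k%:Z + 1 = k.+1 by lia.
by rewrite [r k.+1]/r /= r3E.
Qed.

Lemma q0 : q 0 = 1.
Proof. by []. Qed.

Lemma q1 : q 1 = 0.
Proof. by rewrite (@qS 0) // !q_neg // !mulr0 addr0. Qed.

Lemma q2 : q 2 = w2.
Proof. by rewrite (@qS 1) // [q (1 - 2)]q_neg // mulr0 addr0 mulr1. Qed.

Definition rq_rel (j n : int) : P :=
  r (j - 1) * q n + w3 * r (j - 2) * q (n - 1) + r j * q (n - 2).

Lemma rq_rel0 (n : int) : rq_rel 0 n = q (n - 2).
Proof.
by rewrite /rq_rel [r (0 - 1)]r_neg // [r (0 - 2)]r_neg // !(mul0r, mulr0, add0r) mul1r.
Qed.

Lemma rq_relS (j n : int) : 0 <= j -> 0 <= n ->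
  rq_rel (j + 1) (n + 1) = w3 * rq_rel j n.
Proof.
move=> j_ge0 n_ge0; rewrite /rq_rel rS // qS // !addrK.
have -> : j + 1 - 2 = j - 1 by lia.
have -> : n + 1 - 2 = n - 1 by lia.
by apply: (@subr_char2 _ _ (w2 * r j * q (n - 1))); ring.
Qed.

Lemma rq_rel_shift (j : nat) (n : int) : 0 <= n ->
  rq_rel j (n + j) = w3 ^+ j * q (n - 2).
Proof.
move=> n_ge0; elim: j => [|j IH]; first by rewrite addr0 rq_rel0 mul1r.
have -> : j.+1%:Z = j%:Z + 1 by lia.
rewrite addrA rq_relS //; last lia.
by rewrite IH exprS mulrA.
Qed.

Lemma q_add3 (m : int) : -2 <= m -> q (m + 3) = w2 * q (m + 1) + w3 * q m.
Proof.
move=> m_ge; have -> : m + 3 = m + 2 + 1 by lia.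
rewrite qS; last lia.
by rewrite !addrK; congr (_ * q _ + _ * q _); lia.
Qed.

Lemma qD (n : int) (k : nat) : 0 <= n ->
  q (n + k) = q n * q k + q (n + 1) * q (k%:Z - 1) + w3 * q (n - 1) * q (k%:Z - 2).
Proof.
move=> n_ge0; elim/ltn_ind: k => -[|[|[|l]]] IH.
- by rewrite addr0 q0 [q (_ - 1)]q_neg // [q (_ - 2)]q_neg // !mulr0 mulr1 !addr0.
- by rewrite subrr q1 q0 [q (_ - 2)]q_neg // !mulr0 mulr1 add0r addr0.
- have -> : 2%:Z - 1 = 1 by [].
  have -> : 2%:Z - 2 = 0 by [].
  rewrite q0 q1 q2 mulr0 addr0 mulr1 mulrC.
  have -> : n + 2%:Z = n + 1 + 1 by lia.
  by rewrite qS ?addrK; [congr (_ + w3 * q _); lia | lia].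
have -> : l.+3%:Z = l%:Z + 3 by lia.
have -> : l%:Z + 3 - 1 = l%:Z - 1 + 3 by lia.
have -> : l%:Z + 3 - 2 = l%:Z - 2 + 3 by lia.
rewrite addrA (q_add3 (n + l)); last lia.
rewrite (q_add3 l); last lia.
rewrite (q_add3 (l%:Z - 1)); last lia.
rewrite (q_add3 (l%:Z - 2)); last lia.
rewrite subrK (_ : l%:Z - 2 + 1 = l%:Z - 1); last lia.
move: (IH l.+1 (leqnSn _)); have -> : l.+1%:Z = l%:Z + 1 by lia.
rewrite addrA addrK (_ : l%:Z + 1 - 2 = l%:Z - 1); last lia.
by move=> ->; rewrite (IH l (ltnW (leqnSn _))); ring.
Qed.

Lemma q_odd (k : nat) : q (k%:Z * 2 + 1) = w3 * q (k%:Z - 1) ^+ 2.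
Proof.
have -> : k%:Z * 2 + 1 = k%:Z + k.+1 by lia.
rewrite qD //.
have -> : k.+1%:Z - 1 = k by lia.
have -> : k.+1%:Z - 2 = k%:Z - 1 by lia.
have -> : k%:Z + 1 = k.+1 by lia.
by apply: (@subr_char2 _ _ (q k * q k.+1)); ring.
Qed.

Lemma q_exp2_sub3 (t : nat) : (0 < t)%N -> q ((2 ^ t)%N%:Z - 3) = 0.
Proof.
elim: t => // -[_ _|t IH _]; first exact: q_neg.
have exp2_gt1 : (2 <= 2 ^ t.+1)%N by rewrite -{1}(expn1 2) leq_exp2l.
have -> : (2 ^ t.+2)%N%:Z - 3 = (2 ^ t.+1 - 2)%N%:Z * 2 + 1.
  by rewrite [(2 ^ t.+2)%N]expnS; lia.
rewrite q_odd (_ : (2 ^ t.+1 - 2)%N%:Z - 1 = (2 ^ t.+1)%N%:Z - 3); last lia.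
by rewrite IH // expr0n mulr0.
Qed.

Theorem mainTheorem12 (t n : nat) :
  (2 <= t)%N -> (2 ^ t - 1 <= n)%N ->
  let d : int := (2 ^ t - 1)%N in
  let j : int := n%:Z - d in
  r (j - 1) * q n%:Z + w3 * r (j - 2) * q (n%:Z - 1) + r j * q (n%:Z - 2) = 0.
Proof.
move=> t_ge2 d_le_n d j; rewrite -/(rq_rel j n).
have exp2_gt0 : (0 < 2 ^ t)%N by rewrite expn_gt0.
have -> : j = (n - (2 ^ t - 1))%N by rewrite /j /d; lia.
have -> : n%:Z = (2 ^ t - 1)%N%:Z + (n - (2 ^ t - 1))%N by lia.
rewrite rq_rel_shift // (_ : (2 ^ t - 1)%N%:Z - 2 = (2 ^ t)%N%:Z - 3); last lia.
by rewrite q_exp2_sub3 ?mulr0 //; apply: leq_trans t_ge2.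
Qed.
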